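(* Let $N\ge1$. The closure of $\Phi_N$ in $\mathrm{PSL}_2(\hat{\mathbb{Z}}_{\mathrm{odd}})$ is $\mathrm{PSL}_2(\hat{\mathbb{Z}}_{\mathrm{odd}})$ if $3$ does not divide $N$, and is $\hat D_{\mathrm{odd}}$ if $3$ divides $N$.
   Context: $\bar\Gamma(2)=\Gamma(2)/\{\pm1\}\subset\mathrm{PSL}_2(\mathbb{Z})$, freely generated by the classes $A$ of $\begin{pmatrix}1&2\\0&1\end{pmatrix}$ and $B$ of $\begin{pmatrix}1&0\\2&1\end{pmatrix}$; $\Phi_N$ is the kernel of $\bar\Gamma(2)\to(\mathbb{Z}/N\mathbb{Z})^2$, $A\mapsto(1,0)$, $B\mapsto(0,1)$. Let $\hat{\mathbb{Z}}_{\mathrm{odd}}=\prod_{p\ne2}\mathbb{Z}_p$, with $\mathrm{PSL}_2(\mathbb{Z})\subset\mathrm{PSL}_2(\hat{\mathbb{Z}}_{\mathrm{odd}})$ and the profinite topology. $\hat D_{\mathrm{odd}}$ is the inverse image in $\mathrm{PSL}_2(\hat{\mathbb{Z}}_{\mathrm{odd}})$, under reduction mod $3$, of the Klein four-subgroup $D_3\subset\mathrm{PSL}_2(\mathbb{Z}/3\mathbb{Z})$ consisting of the classes of $\pm I$, $\pm\begin{pmatrix}0&-1\\1&0\end{pmatrix}$, $\pm\begin{pmatrix}-1&1\\1&1\end{pmatrix}$, $\pm\begin{pmatrix}1&1\\1&-1\end{pmatrix}$. *)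

From HB Require Import structures.
From mathcomp Require Import all_boot all_order all_algebra.
Set Implicit Arguments. Unset Strict Implicit. Unset Printing Implicit Defensive.
Import Order.TTheory GRing.Theory Num.Theory.
Local Open Scope ring_scope.

Definition mk2 (a b c d : int) : 'M[int]_2 :=
  \matrix_(i < 2, j < 2)
    if i == 0 then (if j == 0 then a else b) else (if j == 0 then c else d).

Definition congr_mx (m : nat) (X Y : 'M[int]_2) : Prop :=
  forall i j, (X i j = Y i j %[mod m%:Z])%Z.

(** A letter of a word in A, B: (is_A, is_inverse). *)
Definition letter_mx (l : bool * bool) : 'M[int]_2 :=
  match l with
  | (true, false) => mk2 1 2 0 1
  | (true, true) => mk2 1 (-2) 0 1
  | (false, false) => mk2 1 0 2 1
  | (false, true) => mk2 1 0 (-2) 1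
  end.

Definition word_mx (w : seq (bool * bool)) : 'M[int]_2 :=
  foldr (fun l acc => letter_mx l *m acc) 1%:M w.

Definition expsum (gen : bool) (w : seq (bool * bool)) : int :=
  \sum_(l <- w) (if l.1 == gen then (if l.2 then -1 else 1) else 0).

(** gamma in SL_2(Z) represents an element of Phi_N (subset of PSL_2(Z)):
    +-gamma is a word in A, B whose image in (Z/N)^2 is 0. *)
Definition inPhi (N : nat) (g : 'M[int]_2) : Prop :=
  exists w : seq (bool * bool),
    (g = word_mx w \/ g = - word_mx w) /\
    (N%:Z %| expsum true w)%Z /\ (N%:Z %| expsum false w)%Z.

(** An element of SL_2(hat Z_odd), hat Z_odd = lim_{m odd} Z/mZ = prod_{p<>2} Z_p,
    given as a compatible family of integer matrices g m (defined mod m, m odd)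
    with determinant 1 mod m.  Elements of PSL_2(hat Z_odd) are such families
    up to sign. *)
Definition SL2_odd (g : nat -> 'M[int]_2) : Prop :=
  (forall m n, odd m -> odd n -> (m %| n)%N -> congr_mx m (g n) (g m)) /\
  (forall m, odd m -> (\det (g m) = 1 %[mod m%:Z])%Z).

(** The class of g lies in the closure of Phi_N in PSL_2(hat Z_odd) for the
    profinite topology: every basic neighbourhood (+-g) K_m, K_m the kernel of
    reduction mod odd m, meets Phi_N. *)
Definition in_closure_Phi (N : nat) (g : nat -> 'M[int]_2) : Prop :=
  forall m, odd m ->
    exists gam, inPhi N gam /\ (congr_mx m gam (g m) \/ congr_mx m gam (- g m)).

(** Representatives of the Klein four-group D_3 in PSL_2(Z/3Z). *)
Definition D3_reps : seq 'M[int]_2 :=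
  [:: mk2 1 0 0 1; mk2 0 (-1) 1 0; mk2 (-1) 1 1 1; mk2 1 1 1 (-1)].

(** The class of g lies in hat D_odd: its reduction mod 3 lies in D_3. *)
Definition in_Dhat (g : nat -> 'M[int]_2) : Prop :=
  exists2 d, d \in D3_reps & (congr_mx 3 (g 3%N) d \/ congr_mx 3 (g 3%N) (- d)).

(* Everything is detected modulo odd m: g lies in the closure of Phi_N iff for
   each odd m, +-g mod m is the image of an element of Phi_N.  As 2 is a unit
   mod m, Gamma(2) maps onto SL_2(Z/m), which Euclid's algorithm generates by
   the elementary matrices E12 x, E21 x.  The image of Phi_N contains E12 (N x),
   the commutators of Gamma(2), hence E12 (3 x) = [E12 (-x), diag(2, 1/2)], and
   the transposes of these.  So if 3 does not divide both N and m, every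
   elementary matrix, hence all of SL_2(Z/m), is reached.  If 3 divides N, the
   abelianization SL_2(Z/3) -> Z/3 sends A to 1 and B to -1, so Phi_N reduces
   mod 3 into its kernel Q8 = +-D_3.  Conversely, D_3 lifts to commutators of A^+-1
   and B^+-1, and a matrix congruent to 1 mod 3 becomes, after a shift making
   its corner a unit mod m, a product of E12 (3 x), E21 (3 x) and their
   conjugates by Gamma(2). *)

From mathcomp Require Import all_boot all_order all_algebra.
From mathcomp Require Import ring zify.
Set Implicit Arguments. Unset Strict Implicit. Unset Printing Implicit Defensive.
Import Order.TTheory GRing.Theory Num.Theory.
Local Open Scope ring_scope.

Fact three_gt1 : (1 < 3)%N. Proof. by []. Qed.

Section IntrZp.
Variable m : nat.
Hypothesis m_gt1 : (1 < m)%N.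

Let m_neq0 : m%:Z != 0. Proof. by rewrite eqz_nat; case: (m) m_gt1. Qed.

Lemma intr_Zp_modz (x : int) : (x%:~R : 'Z_m) = (x %% m)%Z%:~R.
Proof.
rewrite {1}(divz_eq x m) intrD intrM.
have -> : ((m%:Z)%:~R : 'Z_m) = 0 by rewrite -[RHS](pchar_Zp m_gt1).
by rewrite mulr0 add0r.
Qed.

Lemma val_intr_Zp (x : int) : (x%:~R : 'Z_m)%:Z = (x %% m)%Z.
Proof.
have m_gt0 : 0 < m%:Z by rewrite ltz_nat; case: (m) m_gt1.
rewrite intr_Zp_modz; have := modz_ge0 x m_neq0; have := ltz_pmod x m_gt0.
case: (x %% m)%Z => // a a_lt_m _.
by rewrite -pmulrn val_Zp_nat // modn_small // -ltz_nat.
Qed.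

Lemma intr_Zp_abs_modz (x : int) : (x%:~R : 'Z_m) = `|(x %% m)%Z|%:R.
Proof.
by rewrite intr_Zp_modz -[in LHS](gez0_abs (modz_ge0 x m_neq0)) -pmulrn.
Qed.

Lemma intr_Zp_eq (x y : int) : (x%:~R : 'Z_m) = y%:~R <-> (x = y %[mod m])%Z.
Proof.
split=> [xy | xy]; first by rewrite -!val_intr_Zp xy.
by rewrite intr_Zp_modz xy -intr_Zp_modz.
Qed.

Lemma intr_Zp_unit (x : int) : coprime m `|x| -> (x%:~R : 'Z_m) \is a GRing.unit.
Proof.
by case: x => n /= m_n; rewrite ?NegzE ?mulrNz ?unitrN -pmulrn unitZpE.
Qed.

End IntrZp.

Definition primes_off (m : nat) (a : int) : nat :=
  (\prod_(p <- primes m | ~~ (p %| `|a|)) p)%N.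

Lemma prime_dvd_primes_off m a p : (0 < m)%N -> prime p -> (p %| m)%N ->
  (p %| primes_off m a)%N = ~~ (p %| `|a|)%N.
Proof.
move=> m_gt0 p_pr p_dvd_m; rewrite Euclid_dvd_prod // big_has_cond.
apply/hasP/idP => [[q q_m /andP[q_a p_q]] | p_a].
  have q_pr : prime q by move: q_m; rewrite mem_primes => /and3P[].
  by move: p_q; rewrite dvdn_prime2 // => /eqP ->.
by exists p; rewrite ?mem_primes ?p_pr ?m_gt0 ?p_dvd_m //= p_a dvdnn.
Qed.

(* A prime of m that divides a divides neither t, primes_off m a nor c, and one
   that does not divide a divides primes_off m a: either way it divides exactly
   one of the two summands. *)
Lemma coprime_add_primes_off m t a c : (0 < m)%N -> coprime t `|a| ->
  (forall p, prime p -> (p %| m)%N -> (p %| `|a|)%N -> ~~ (p %| `|c|)%N) ->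
  coprime m `|a + t%:Z * (primes_off m a)%:Z * c|.
Proof.
move=> m_gt0 t_a a_c; set k := primes_off m a; set n := `|_|%N.
apply/negbNE/negP => not_coprime.
have gcd_gt1 : (1 < gcdn m n)%N.
  by move: not_coprime (gcdn_gt0 m n); rewrite /coprime m_gt0; case: gcdn => [|[]].
have p_pr : prime (pdiv (gcdn m n)) := pdiv_prime gcd_gt1.
set p := pdiv _ in p_pr.
have p_m : (p %| m)%N := dvdn_trans (pdiv_dvd _) (dvdn_gcdl m n).
have p_n : (p%:Z %| a + t%:Z * k%:Z * c)%Z.
  by rewrite dvdzE (dvdn_trans (pdiv_dvd _) (dvdn_gcdr m n)).
have p_tkc x : (p%:Z %| t%:Z * k%:Z * x)%Z = [|| p %| t, p %| k | p %| `|x|]%N.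
  by rewrite dvdzE !abszM !Euclid_dvdM // orbA.
have p_k := prime_dvd_primes_off a m_gt0 p_pr p_m.
case p_a: (p %| `|a|)%N.
  have : (p%:Z %| (a + t%:Z * k%:Z * c) - a)%Z by rewrite rpredB // dvdzE.
  rewrite addrC addKr p_tkc p_k p_a /= => /orP[p_t | p_c].
    by have := coprime_dvdl p_t t_a; rewrite prime_coprime // p_a.
  by move: (a_c p p_pr p_m p_a); rewrite p_c.
have : (p%:Z %| (a + t%:Z * k%:Z * c) - t%:Z * k%:Z * c)%Z.
  by rewrite rpredB // p_tkc p_k p_a orbT.
by rewrite addrK dvdzE p_a.
Qed.

Lemma coprime3_1mod3 (a : int) : (a = 1 %[mod 3])%Z -> coprime 3 `|a|.
Proof.
move=> a_1; rewrite prime_coprime //; apply/negP => three_a.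
have /dvdz_mod0P : (3 %| a)%Z by rewrite dvdzE.
by rewrite a_1.
Qed.

Lemma prime_dvd_col_det (a b c d : int) (m p : nat) :
  (a * d - b * c = 1 %[mod m])%Z -> prime p -> (p %| m)%N -> (p %| `|a|)%N -> ~~ (p %| `|c|)%N.
Proof.
move=> det1 p_pr p_m p_a; apply/negP => p_c.
have p_det1 : (p%:Z %| a * d - b * c - 1)%Z.
  by apply: (@dvdz_trans m); [rewrite dvdzE | rewrite -eqz_mod_dvd; apply/eqP].
have p_det : (p%:Z %| a * d - b * c)%Z.
  by apply: rpredB; [apply: dvdz_mulr | apply: dvdz_mull]; rewrite dvdzE.
have := rpredB p_det p_det1; rewrite opprB addrC subrK dvdz1 /=.
by move/eqP=> p1; move: p_pr; rewrite p1.
Qed.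

Definition M2 {R : Type} (a b c d : R) : 'M[R]_2 :=
  \matrix_(i < 2, j < 2)
    if i == 0 then (if j == 0 then a else b) else (if j == 0 then c else d).

Lemma mk2E (a b c d : int) : mk2 a b c d = M2 a b c d. Proof. by []. Qed.

Lemma ord2P (i : 'I_2) : i = 0 \/ i = 1.
Proof. by case: i => [[|[|i]] Hi] //; [left|right]; apply: val_inj. Qed.

Ltac mx2_ext := let i := fresh in let j := fresh in apply/matrixP => i j;
  case: (ord2P i) => ->; case: (ord2P j) => ->; rewrite ?mxE //=.

Lemma map_M2 (R S : Type) (f : R -> S) (a b c d : R) :
  map_mx f (M2 a b c d) = M2 (f a) (f b) (f c) (f d).
Proof. by mx2_ext. Qed.

Lemma trmx_M2 (R : Type) (a b c d : R) : (M2 a b c d)^T = M2 a c b d.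
Proof. by mx2_ext. Qed.

Section Matrix2.
Variable R : comNzRingType.
Implicit Types (a b c d u v x y : R) (X : 'M[R]_2).

Lemma M2E X : X = M2 (X 0 0) (X 0 1) (X 1 0) (X 1 1).
Proof. by mx2_ext. Qed.

Lemma mul_M2 a b c d a' b' c' d' :
  M2 a b c d *m M2 a' b' c' d' =
  M2 (a * a' + b * c') (a * b' + b * d') (c * a' + d * c') (c * b' + d * d').
Proof. by mx2_ext; rewrite !big_ord_recl big_ord0 !mxE /= addr0. Qed.

Lemma mx1_M2 : 1%:M = M2 1 0 0 1 :> 'M[R]_2.
Proof. by mx2_ext. Qed.

Lemma opp_M2 a b c d : - M2 a b c d = M2 (- a) (- b) (- c) (- d).
Proof. by mx2_ext. Qed.

Lemma det_M2 a b c d : \det (M2 a b c d) = a * d - b * c.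
Proof.
rewrite (expand_det_row _ 0) !big_ord_recl big_ord0 /cofactor !det_mx11 !mxE /=.
by rewrite /bump /= expr0 expr1; ring.
Qed.

Definition E12 x := M2 1 x 0 1.
Definition E21 x := M2 1 0 x 1.

Lemma trmx_E12 x : (E12 x)^T = E21 x.
Proof. exact: trmx_M2. Qed.

Lemma E12D x y : E12 x *m E12 y = E12 (x + y).
Proof. by rewrite mul_M2; congr M2; ring. Qed.

Lemma E21D x y : E21 x *m E21 y = E21 (x + y).
Proof. by rewrite -!trmx_E12 -trmx_mul E12D addrC. Qed.

Lemma E12_0 : E12 0 = 1%:M.
Proof. by rewrite mx1_M2. Qed.

Lemma E12N x : E12 x *m E12 (- x) = 1%:M.
Proof. by rewrite E12D subrr E12_0. Qed.

Lemma diag_conj_E12 t t' y : t * t' = 1 ->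
  M2 t 0 0 t' *m E12 y *m M2 t' 0 0 t = E12 (t * t * y).
Proof. by move=> tt'; rewrite !mul_M2; congr M2; ring: tt'. Qed.

Lemma M2_LDU u u' b c d : u * u' = 1 -> u * d - b * c = 1 ->
  M2 u b c d = E21 (c * u') *m M2 u 0 0 u' *m E12 (u' * b).
Proof.
move=> uu' /eqP; rewrite subr_eq => /eqP det1.
have -> : d = u' * (1 + b * c) by rewrite -det1 mulrA [u' * u]mulrC uu' mul1r.
by rewrite !mul_M2; congr M2; ring: uu'.
Qed.

Lemma M2_diag_elementary u u' : u * u' = 1 -> M2 u 0 0 u' =
  E12 u *m (E21 (- u') *m E12 (u - 1) *m E21 u' *m E21 (1 - u'))
  *m E12 (- u) *m E12 (u - 1).
Proof. by move=> uu'; rewrite !mul_M2; congr M2; ring: uu'. Qed.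

End Matrix2.

Definition letter_inv (l : bool * bool) := (l.1, ~~ l.2).
Definition word_inv (w : seq (bool * bool)) := rev (map letter_inv w).

Definition word_comm (u v : seq (bool * bool)) := u ++ v ++ word_inv u ++ word_inv v.

Definition letter_tr (l : bool * bool) := (~~ l.1, l.2).
Definition word_tr (w : seq (bool * bool)) := rev (map letter_tr w).

Section Words.
Implicit Types (l : bool * bool) (w : seq (bool * bool)) (gen : bool).

Lemma word_mx_cons l w : word_mx (l :: w) = letter_mx l *m word_mx w.
Proof. by []. Qed.

Lemma word_mx_cat w1 w2 : word_mx (w1 ++ w2) = word_mx w1 *m word_mx w2.
Proof. by elim: w1 => [|l w1 IH] /=; rewrite ?mul1mx // IH mulmxA. Qed.

Lemma det_word_mx w : \det (word_mx w) = 1.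
Proof.
elim: w => [|l w IH]; first by rewrite det1.
by rewrite word_mx_cons det_mulmx IH mulr1; case: l => [[] []]; rewrite det_M2.
Qed.

Lemma word_mx_inv w : word_mx w *m word_mx (word_inv w) = 1%:M.
Proof.
elim: w => [|l w IH]; first by rewrite mul1mx.
rewrite /word_inv /= rev_cons -cats1 word_mx_cat mulmxA -(mulmxA (letter_mx l)) IH.
by rewrite mulmx1 /= mulmx1 mx1_M2; case: l => [[] []]; rewrite mul_M2; congr M2; ring.
Qed.

Lemma word_invK : involutive word_inv.
Proof.
by move=> w; rewrite /word_inv map_rev revK -map_comp map_id_in // => -[? []].
Qed.

Lemma word_inv_mx w : word_mx (word_inv w) *m word_mx w = 1%:M.
Proof. by rewrite -{2}(word_invK w) word_mx_inv. Qed.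

Lemma trmx_word_mx w : (word_mx w)^T = word_mx (word_tr w).
Proof.
elim: w => [|l w IH]; first by rewrite trmx1.
rewrite word_mx_cons trmx_mul IH /word_tr /= rev_cons -cats1 word_mx_cat /= mulmx1.
by case: l => [[] []]; rewrite trmx_M2.
Qed.

Lemma expsum_cat gen w1 w2 : expsum gen (w1 ++ w2) = expsum gen w1 + expsum gen w2.
Proof. exact: big_cat. Qed.

Lemma expsum_word_inv gen w : expsum gen (word_inv w) = - expsum gen w.
Proof.
rewrite /expsum big_rev big_map -sumrN; apply: eq_bigr => -[[] []] _ /=.
all: by case: gen; rewrite ?oppr0.
Qed.

Lemma expsum_word_tr gen w : expsum gen (word_tr w) = expsum (~~ gen) w.
Proof.
by rewrite /expsum big_rev big_map; apply: eq_bigr => -[[] []] _; case: gen.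
Qed.

Lemma word_mx_comm u v : word_mx (word_comm u v) =
  word_mx u *m word_mx v *m word_mx (word_inv u) *m word_mx (word_inv v).
Proof. by rewrite !word_mx_cat !mulmxA. Qed.

Lemma expsum_word_comm gen u v : expsum gen (word_comm u v) = 0.
Proof. by rewrite !expsum_cat !expsum_word_inv addrCA !addrA addrK subrr. Qed.

Lemma word_mx_nseqA k : word_mx (nseq k (true, false)) = E12 (2 * k%:Z).
Proof.
elim: k => [|k IH]; first by rewrite mulr0 E12_0.
by rewrite word_mx_cons IH E12D; rewrite intS mulrDr mulr1.
Qed.

Lemma expsum_nseqA gen k : expsum gen (nseq k (true, false)) = if gen then k%:Z else 0.
Proof.
rewrite /expsum big_nseq; case: gen => /=; last by rewrite iter_fix ?addr0.
by elim: k => //= k ->; rewrite -addn1 PoszD addrC.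
Qed.

End Words.

Definition redm (m : nat) (X : 'M[int]_2) : 'M['Z_m]_2 := map_mx intr X.

Definition eqpm {R : pzRingType} (X Y : 'M[R]_2) := X = Y \/ X = - Y.

Section Eqpm.
Variable R : pzRingType.
Implicit Types X Y Z : 'M[R]_2.

Lemma eqpm_refl X : eqpm X X. Proof. by left. Qed.

Lemma eqpm_sym X Y : eqpm X Y -> eqpm Y X.
Proof. by move=> [->|->]; [left | right; rewrite opprK]. Qed.

Lemma eqpm_trans Y X Z : eqpm X Y -> eqpm Y Z -> eqpm X Z.
Proof. by move=> [->|->] [->|->]; rewrite ?opprK; [left|right|right|left]. Qed.

Lemma eqpm_mull A X Y : eqpm X Y -> eqpm (A *m X) (A *m Y).
Proof. by move=> [->|->]; [left | right; rewrite mulmxN]. Qed.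

End Eqpm.

Section Reduction.
Variable m : nat.
Hypothesis m_gt1 : (1 < m)%N.
Implicit Types X Y : 'M[int]_2.

Lemma redmM X Y : redm m (X *m Y) = redm m X *m redm m Y.
Proof. exact: map_mxM. Qed.

Lemma redm1 : redm m 1%:M = 1%:M.
Proof. exact: map_mx1. Qed.

Lemma redmN X : redm m (- X) = - redm m X.
Proof. exact: map_mxN. Qed.

Lemma redm_tr X : redm m X^T = (redm m X)^T.
Proof. by rewrite map_trmx. Qed.

Lemma redm_E12 x : redm m (E12 x) = E12 x%:~R.
Proof. by rewrite /redm map_M2 rmorph0 rmorph1. Qed.

Lemma det_redm X : (\det X = 1 %[mod m])%Z -> \det (redm m X) = 1.
Proof. by move/(intr_Zp_eq m_gt1); rewrite det_map_mx. Qed.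

Lemma congr_mx_redm X Y : congr_mx m X Y <-> redm m X = redm m Y.
Proof.
split=> [XY | XY i j]; first by apply/matrixP => i j; rewrite !mxE; apply/(intr_Zp_eq m_gt1).
by apply/(intr_Zp_eq m_gt1); move/matrixP: XY => /(_ i j); rewrite !mxE.
Qed.

Lemma congr_mx_eqpm X Y :
  (congr_mx m X Y \/ congr_mx m X (- Y)) <-> eqpm (redm m X) (redm m Y).
Proof. by rewrite /eqpm -redmN !congr_mx_redm. Qed.

End Reduction.

Definition Gamma2_mod (m : nat) (X : 'M['Z_m]_2) :=
  exists w, redm m (word_mx w) = X.

Definition Phi_mod (m N : nat) (X : 'M['Z_m]_2) := exists w,
  [/\ (N%:Z %| expsum true w)%Z, (N%:Z %| expsum false w)%Z & redm m (word_mx w) = X].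

Section Images.
Variables m N : nat.
Implicit Types X Y U V : 'M['Z_m]_2.

Lemma Gamma2_modM X Y : Gamma2_mod X -> Gamma2_mod Y -> Gamma2_mod (X *m Y).
Proof. by case=> [u <-] [v <-]; exists (u ++ v); rewrite word_mx_cat redmM. Qed.

Lemma Phi_modM X Y : Phi_mod N X -> Phi_mod N Y -> Phi_mod N (X *m Y).
Proof.
case=> u [uA uB <-] [v [vA vB <-]]; exists (u ++ v).
by rewrite word_mx_cat redmM !expsum_cat !rpredD.
Qed.

Lemma Gamma2_mod_tr X : Gamma2_mod X -> Gamma2_mod X^T.
Proof. by case=> w <-; exists (word_tr w); rewrite -trmx_word_mx redm_tr. Qed.

Lemma Phi_mod_tr X : Phi_mod N X -> Phi_mod N X^T.
Proof.
case=> w [wA wB <-]; exists (word_tr w).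
by rewrite -trmx_word_mx redm_tr !expsum_word_tr.
Qed.

Lemma redm_word_inv w V : redm m (word_mx w) *m V = 1%:M ->
  redm m (word_mx (word_inv w)) = V.
Proof.
move=> wV; rewrite -[LHS]mulmx1 -wV mulmxA -redmM word_inv_mx.
by rewrite redm1 mul1mx.
Qed.

Lemma Phi_mod_conj U V X : Gamma2_mod U -> U *m V = 1%:M ->
  Phi_mod N X -> Phi_mod N (U *m X *m V).
Proof.
case=> u <- uV [w [wA wB <-]]; exists (u ++ w ++ word_inv u).
have cancel_u g : expsum g u + (expsum g w - expsum g u) = expsum g w by ring.
by rewrite !word_mx_cat !redmM (redm_word_inv uV) mulmxA !expsum_cat !expsum_word_inv !cancel_u.
Qed.

Lemma Phi_mod_commutator U V U' V' : Gamma2_mod U -> Gamma2_mod V ->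
  U *m U' = 1%:M -> V *m V' = 1%:M -> Phi_mod N (U *m V *m U' *m V').
Proof.
case=> u <- [v <-] uU' vV'; exists (word_comm u v).
by rewrite word_mx_comm !redmM (redm_word_inv uU') (redm_word_inv vV') !expsum_word_comm dvdz0.
Qed.

End Images.

Section ElementaryGeneration.
Variables (m : nat) (P : 'M['Z_m]_2 -> Prop).
Hypothesis PM : forall X Y, P X -> P Y -> P (X *m Y).
Hypothesis Ptr : forall X, P X -> P X^T.
Hypothesis P12 : forall x, P (E12 x).

Let P21 x : P (E21 x).
Proof. by rewrite -trmx_E12; apply: Ptr. Qed.

Let P_upper (u v y : 'Z_m) : u * v = 1 -> P (M2 u y 0 v).
Proof.
move=> uv.
have -> : M2 u y 0 v = E12 u *m E21 (- v) *m E12 u *m E12 (-1) *m E21 1 *m E12 (-1)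
                         *m E12 (v * y).
  by rewrite /E12 /E21 !mul_M2; congr M2; ring: uv.
by repeat apply: PM.
Qed.

Let P_rot : P (M2 0 1 (-1) 0).
Proof.
have -> : M2 0 1 (-1) 0 = E12 1 *m E21 (-1) *m E12 1 :> 'M['Z_m]_2.
  by rewrite /E12 /E21 !mul_M2; congr M2; ring.
by repeat apply: PM.
Qed.

(* Euclid's algorithm on the nonnegative representatives of the first column *)
Let P_euclid n : forall (a c : nat) (b d : 'Z_m), (a + c <= n)%N ->
  a%:R * d - b * c%:R = 1 -> P (M2 a%:R b c%:R d).
Proof.
elim: n => [|n IH] a c b d ac_le_n det1.
  move: ac_le_n det1; rewrite leqn0 addn_eq0 => /andP[/eqP-> /eqP->].
  by rewrite !mul0r mulr0 subrr => /esym/eqP; rewrite oner_eq0.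
have [c0 | c_gt0] := posnP c.
  by subst c; rewrite mulr0n; apply: P_upper; rewrite -[RHS]det1 mulr0n mulr0 subr0.
have [a0 | a_gt0] := posnP a.
  subst a.
  have -> : M2 0%:R b c%:R d = M2 0 1 (-1) 0 *m M2 (- c%:R) (- d) 0 b.
    by rewrite mul_M2; congr M2; ring.
  by apply: PM => //; apply: P_upper; rewrite -[RHS]det1; ring.
have [c_le_a | a_lt_c] := leqP c a.
  have -> : M2 a%:R b c%:R d = E12 1 *m M2 (a - c)%N%:R (b - d) c%:R d.
    by rewrite /E12 mul_M2 natrB //; congr M2; ring.
  apply: PM => //; apply: IH; first by lia.
  by rewrite natrB // -[RHS]det1; ring.
have -> : M2 a%:R b c%:R d = E21 1 *m M2 a%:R b (c - a)%N%:R (d - b).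
  by rewrite /E21 mul_M2 natrB 1?ltnW //; congr M2; ring.
apply: PM => //; apply: IH; first by lia.
by rewrite natrB 1?ltnW // -[RHS]det1; ring.
Qed.

Lemma SL2_Zp_ind X : \det X = 1 -> P X.
Proof.
rewrite [X]M2E det_M2 => det1.
by rewrite -[X 0 0]natr_Zp -[X 1 0]natr_Zp; apply: (P_euclid (leqnn _)); rewrite !natr_Zp.
Qed.

End ElementaryGeneration.

Definition Zp_half (m : nat) : 'Z_m := (m./2).+1%:R.

Section OddModulus.
Variables m N : nat.
Hypotheses (m_gt1 : (1 < m)%N) (m_odd : odd m).
Implicit Types (x y : 'Z_m) (X : 'M['Z_m]_2).

Lemma mul2_Zp_half : 2 * Zp_half m = 1.
Proof.
have double_half : (2 * (m./2).+1 = m + 1)%N.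
  by rewrite -[in RHS](odd_double_half m) m_odd; lia.
by rewrite /Zp_half -natrM double_half natrD (pchar_Zp m_gt1) add0r.
Qed.

Lemma redm_nseqA k : redm m (word_mx (nseq (k * (m./2).+1) (true, false))) = E12 k%:R.
Proof.
rewrite word_mx_nseqA /redm map_M2 intrM -(pmulrn 1 (k * (m./2).+1)) natrM.
by rewrite mulrCA mul2_Zp_half mulr1 /E12; congr M2.
Qed.

Lemma Gamma2_mod_E12 x : Gamma2_mod (E12 x).
Proof. by exists (nseq (x * (m./2).+1) (true, false)); rewrite redm_nseqA natr_Zp. Qed.

Lemma Gamma2_mod_SL2 X : \det X = 1 -> Gamma2_mod X.
Proof.
by apply: SL2_Zp_ind; [exact: Gamma2_modM | exact: Gamma2_mod_tr | exact: Gamma2_mod_E12].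
Qed.

Lemma Phi_mod_E12_mulN x : Phi_mod N (E12 (N%:R * x)).
Proof.
exists (nseq (N * x * (m./2).+1) (true, false)).
by rewrite !expsum_nseqA dvdz0 redm_nseqA natrM natr_Zp -mulnA PoszM dvdz_mulr.
Qed.

(* diag(2, 1/2) conjugates E12 x into E12 (4 x), so their commutator is E12 (3 x). *)
Lemma Phi_mod_E12_mul3 x : Phi_mod N (E12 (3 * x)).
Proof.
have two_half := mul2_Zp_half; have half_two : Zp_half m * 2 = 1 by rewrite mulrC.
have -> : E12 (3 * x) =
    E12 (- x) *m M2 2 0 0 (Zp_half m) *m E12 x *m M2 (Zp_half m) 0 0 2.
  by rewrite -!(mulmxA (E12 (- x))) diag_conj_E12 // E12D; congr E12; ring.
apply: Phi_mod_commutator; first exact: Gamma2_mod_E12.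
- by apply: Gamma2_mod_SL2; rewrite det_M2 mulr0 subr0.
- by rewrite E12D addNr E12_0.
- by rewrite mul_M2 mx1_M2 !(mulr0, mul0r, addr0, add0r) two_half half_two.
Qed.

Lemma Phi_mod_SL2_of_E12 : (forall x, Phi_mod N (E12 x)) ->
  forall X, \det X = 1 -> Phi_mod N X.
Proof. by move=> PhiE12; apply: SL2_Zp_ind; [exact: Phi_modM | exact: Phi_mod_tr |]. Qed.

Lemma Phi_mod_SL2_coprime3N : ~~ (3 %| N)%N -> forall X, \det X = 1 -> Phi_mod N X.
Proof.
move=> N_coprime3; apply: Phi_mod_SL2_of_E12 => x.
have [a _] := Bezoutl N (isT : (0 < 3)%N).
rewrite (eqP (_ : coprime 3 N)) ?prime_coprime // => /dvdnP[q def_q].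
have -> : x = 3 * (q%:R * x) + N%:R * (- (a%:R * x)).
  have Bezout_q : (q%:R * 3 - a%:R * N%:R : 'Z_m) = 1.
    by rewrite -natrM -def_q natrD natrM addrK.
  by transitivity (x * (q%:R * 3 - a%:R * N%:R)); [rewrite Bezout_q mulr1 | ring].
by rewrite -E12D; apply: Phi_modM; [exact: Phi_mod_E12_mul3 | exact: Phi_mod_E12_mulN].
Qed.

Lemma Phi_mod_SL2_coprime3m : ~~ (3 %| m)%N -> forall X, \det X = 1 -> Phi_mod N X.
Proof.
move=> m_coprime3; apply: Phi_mod_SL2_of_E12 => x.
have unit3 : (3 : 'Z_m) \is a GRing.unit.
  by rewrite unitZpE // coprime_sym prime_coprime.
by rewrite -[x]mul1r -(mulrV unit3) -mulrA; exact: Phi_mod_E12_mul3.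
Qed.

Lemma Gamma2_mod_E21 x : Gamma2_mod (E21 x).
Proof. by rewrite -trmx_E12; apply/Gamma2_mod_tr/Gamma2_mod_E12. Qed.

Lemma Phi_mod_E21_mul3 x : Phi_mod N (E21 (3 * x)).
Proof. by rewrite -trmx_E12; apply/Phi_mod_tr/Phi_mod_E12_mul3. Qed.

Lemma Phi_mod_diag_1mod3 (u u' y : 'Z_m) : u * u' = 1 -> u = 1 + 3 * y ->
  Phi_mod N (M2 u 0 0 u').
Proof.
move=> uu' def_u; rewrite (M2_diag_elementary uu').
have u_sub1 : u - 1 = 3 * y by rewrite def_u addrAC subrr add0r.
have -> : 1 - u' = 3 * (y * u') by rewrite mulrA -u_sub1 mulrBl uu' mul1r.
rewrite u_sub1.
apply: Phi_modM; last exact: Phi_mod_E12_mul3.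
apply: Phi_mod_conj; [exact: Gamma2_mod_E12 | exact: E12N |].
apply: Phi_modM; last exact: Phi_mod_E21_mul3.
apply: Phi_mod_conj; first exact: Gamma2_mod_E21.
  by rewrite E21D addNr -trmx_E12 E12_0 trmx1.
exact: Phi_mod_E12_mul3.
Qed.

Lemma Phi_mod_level3_unit (u u' y b c d : 'Z_m) : u * u' = 1 -> u = 1 + 3 * y ->
  u * d - (3 * b) * (3 * c) = 1 -> Phi_mod N (M2 u (3 * b) (3 * c) d).
Proof.
move=> uu' def_u det1; rewrite (M2_LDU uu' det1).
apply: Phi_modM; last by rewrite mulrCA; exact: Phi_mod_E12_mul3.
apply: Phi_modM; first by rewrite -mulrA; exact: Phi_mod_E21_mul3.
exact: Phi_mod_diag_1mod3 uu' def_u.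
Qed.

Lemma Phi_mod_level3_coprime (Y : 'M[int]_2) : congr_mx 3 Y 1%:M ->
  coprime m `|Y 0 0| -> (\det Y = 1 %[mod m])%Z -> Phi_mod N (redm m Y).
Proof.
move=> Y1 Y00_coprime detY.
have entry i j : exists q, Y i j = (1%:M : 'M[int]_2) i j + 3 * q.
  have /eqP := Y1 i j; rewrite eqz_mod_dvd => /dvdzP[q def_q].
  by exists q; rewrite mulrC -def_q addrC subrK.
have [a0 Ea] := entry 0 0; have [b0 Eb] := entry 0 1; have [c0 Ec] := entry 1 0.
rewrite !mxE /= ?add0r in Ea Eb Ec.
have unit_u : ((Y 0 0)%:~R : 'Z_m) \is a GRing.unit := intr_Zp_unit m_gt1 Y00_coprime.
have := det_redm m_gt1 detY; rewrite [redm m Y]M2E !mxE det_M2 Eb Ec !intrM => det1.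
apply: (Phi_mod_level3_unit (y := a0%:~R)) det1; first exact: mulrV.
by rewrite Ea intrD intrM.
Qed.

(* Multiplying by E12 (3 k), for k = primes_off m (Y 0 0), makes the top-left
   entry a unit mod m without changing Y mod 3. *)
Lemma Phi_mod_level3 (Y : 'M[int]_2) : (3 %| m)%N -> congr_mx 3 Y 1%:M ->
  (\det Y = 1 %[mod m])%Z -> Phi_mod N (redm m Y).
Proof.
move=> m3 Y1 detY; set k := primes_off m (Y 0 0).
have shift_E12 : Y = E12 (3 * - k%:Z) *m (E12 (3 * k%:Z) *m Y).
  by rewrite mulmxA E12D mulrN addNr E12_0 mul1mx.
rewrite shift_E12 redmM redm_E12 intrM; apply: Phi_modM; first exact: Phi_mod_E12_mul3.
apply: Phi_mod_level3_coprime.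
- apply/(congr_mx_redm three_gt1).
  rewrite redmM ((congr_mx_redm three_gt1 _ _).1 Y1) redm1 mulmx1.
  by rewrite redm_E12 intrM (intr_Zp_modz three_gt1 3) mul0r E12_0.
- rewrite [Y in _ *m Y]M2E mul_M2 !mxE /= mul1r.
  apply: (@coprime_add_primes_off _ 3); first by case: (m) m_gt1.
  + by apply: coprime3_1mod3; have := Y1 0 0; rewrite !mxE.
  + move=> p; apply: (prime_dvd_col_det (b := Y 0 1) (d := Y 1 1)).
    by rewrite -det_M2 -M2E.
- by rewrite det_mulmx det_M2 mulr1 mulr0 subr0 mul1r.
Qed.

Lemma Phi_mod_level3_pm (Y : 'M[int]_2) : (3 %| m)%N -> eqpm (redm 3 Y) 1%:M ->
  (\det Y = 1 %[mod m])%Z -> exists2 X, Phi_mod N X & eqpm X (redm m Y).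
Proof.
move=> m3 [Y_1 | Y_N1] detY.
  exists (redm m Y); last exact: eqpm_refl.
  by apply: Phi_mod_level3 => //; apply/(congr_mx_redm three_gt1); rewrite Y_1 redm1.
exists (redm m (- Y)); last by right; rewrite redmN.
apply: Phi_mod_level3 => //.
  by apply/(congr_mx_redm three_gt1); rewrite redmN Y_N1 opprK redm1.
by rewrite -scaleN1r detZ sqrrN expr1n mul1r.
Qed.

End OddModulus.

(* A matrix over Z/3 encoded by its four entries in {0, 1, 2}, in row-major
   order, so that membership in explicit finite lists can be decided by
   computation. *)
Definition mx3 := (nat * nat * nat * nat)%type.

Definition Zp3_mx (t : mx3) : 'M['Z_3]_2 :=
  let: (a, b, c, d) := t in M2 a%:R b%:R c%:R d%:R.

Definition mul3 (s t : mx3) : mx3 :=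
  let: (a, b, c, d) := s in let: (a', b', c', d') := t in
  ((a * a' + b * c') %% 3, (a * b' + b * d') %% 3,
   (c * a' + d * c') %% 3, (c * b' + d * d') %% 3)%N.

Definition opp3 (t : mx3) : mx3 :=
  let: (a, b, c, d) := t in ((2 * a) %% 3, (2 * b) %% 3, (2 * c) %% 3, (2 * d) %% 3)%N.

Definition letter3 (l : bool * bool) : mx3 :=
  match l with
  | (true, false) => (1, 2, 0, 1) | (true, true) => (1, 1, 0, 1)
  | (false, false) => (1, 0, 2, 1) | (false, true) => (1, 0, 1, 1)
  end%N.

Definition word3 (w : seq (bool * bool)) : mx3 :=
  foldr (fun l => mul3 (letter3 l)) (1, 0, 0, 1)%N w.

Lemma Zp3_mxM s t : Zp3_mx s *m Zp3_mx t = Zp3_mx (mul3 s t).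
Proof.
case: s => [[[a b] c] d]; case: t => [[[a' b'] c'] d'].
by rewrite /= mul_M2 !Zp_nat_mod // !natrD !natrM.
Qed.

Lemma Zp3_mxN t : - Zp3_mx t = Zp3_mx (opp3 t).
Proof.
have opp_Zp3 (x : 'Z_3) : - x = 2 * x.
  apply/eqP; rewrite eq_sym -subr_eq0 opprK mulr_natl -mulrSr -mulr_natl.
  by rewrite (pchar_Zp three_gt1) mul0r.
by case: t => [[[a b] c] d]; rewrite /= opp_M2 !Zp_nat_mod // !natrM !opp_Zp3.
Qed.

Lemma eqpm_Zp3_mx s t : (s == t) || (s == opp3 t) -> eqpm (Zp3_mx s) (Zp3_mx t).
Proof. by case/orP=> /eqP->; [left | right; rewrite Zp3_mxN]. Qed.

Lemma redm3_mk2 (a b c d : int) : redm 3 (mk2 a b c d) =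
  Zp3_mx (`|(a %% 3)%Z|, `|(b %% 3)%Z|, `|(c %% 3)%Z|, `|(d %% 3)%Z|)%N.
Proof. by rewrite mk2E /redm map_M2 !(intr_Zp_abs_modz three_gt1). Qed.

Lemma redm3_word_mx w : redm 3 (word_mx w) = Zp3_mx (word3 w).
Proof.
elim: w => [|l w IH]; first by rewrite redm1 mx1_M2.
by rewrite word_mx_cons redmM IH -Zp3_mxM; case: l => [[] []]; rewrite redm3_mk2.
Qed.

Definition D3_codes : seq mx3 :=
  [:: (1, 0, 0, 1); (0, 2, 1, 0); (2, 1, 1, 1); (1, 1, 1, 2)]%N.

Lemma D3_reps_mod3 : [seq redm 3 d | d <- D3_reps] = [seq Zp3_mx s | s <- D3_codes].
Proof. by rewrite /= !redm3_mk2. Qed.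

(* The quaternion subgroup Q8 = +-D_3 of SL_2(Z/3) is the kernel of its
   abelianization SL_2(Z/3) -> Z/3, which maps A to 1 and B to -1; coset3 k is
   the fibre over k. *)
Definition Q8 : seq mx3 := flatten [seq [:: s; opp3 s] | s <- D3_codes].

Definition coset3 (k : nat) : seq mx3 :=
  [seq mul3 (iter k (mul3 (letter3 (true, false))) (1, 0, 0, 1)%N) t | t <- Q8].

Definition letter_chi (l : bool * bool) : int := if l.1 (+) l.2 then 1 else -1.

Lemma expsum_diff_cons l w : expsum true (l :: w) - expsum false (l :: w) =
  letter_chi l + (expsum true w - expsum false w).
Proof. by case: l => [[] []]; rewrite /expsum /letter_chi !big_cons /=; ring. Qed.

Lemma letter3_coset : all (fun l => all (fun k =>
    all (fun t => mul3 (letter3 l) t \in coset3 `|((letter_chi l + k%:Z) %% 3)%Z|)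
      (coset3 k)) (iota 0 3))
  [:: (true, false); (true, true); (false, false); (false, true)].
Proof. by vm_compute. Qed.

Lemma word3_coset w : word3 w \in coset3 `|((expsum true w - expsum false w) %% 3)%Z|.
Proof.
elim: w => [|l w IH]; first by rewrite /expsum !big_nil.
rewrite /= expsum_diff_cons -modzDmr; set k := `|_|%N in IH.
have mod_ge0 : (0 <= (expsum true w - expsum false w) %% 3)%Z by rewrite modz_ge0.
have k_lt3 : (k < 3)%N by rewrite -ltz_nat gez0_abs // ltz_pmod.
rewrite -[X in (_ + X)%Z](gez0_abs mod_ge0) -/k.
have /allP/(_ l) := letter3_coset; case: l => [[] []] /(_ isT)/allP/(_ k).
all: by rewrite mem_iota k_lt3 => /(_ isT)/allP/(_ _ IH).
Qed.

Lemma word3_Q8 w : (3 %| expsum true w)%Z -> (3 %| expsum false w)%Z -> word3 w \in Q8.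
Proof.
move=> wA wB; have := word3_coset w.
by rewrite (dvdz_mod0P (rpredB wA wB)) (_ : coset3 0 = Q8).
Qed.

Lemma Q8_D3 t : t \in Q8 -> exists2 d, d \in D3_reps & eqpm (Zp3_mx t) (redm 3 d).
Proof.
case/flatten_mapP => s s_D3 t_pm.
have /mapP[d d_D3 s_d] : Zp3_mx s \in [seq redm 3 d | d <- D3_reps].
  by rewrite D3_reps_mod3 map_f.
by exists d; rewrite // -s_d; apply: eqpm_Zp3_mx; rewrite !inE in t_pm.
Qed.

Definition D3_words : seq (seq (bool * bool)) :=
  [:: [::]; word_comm [:: (true, false)] [:: (false, false)];
   word_comm [:: (true, false)] [:: (false, true)];
   word_comm [:: (true, true)] [:: (false, false)]].

Lemma expsum_D3_words gen w : w \in D3_words -> expsum gen w = 0.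
Proof.
by rewrite !inE => /or4P[] /eqP->; rewrite ?expsum_word_comm // /expsum big_nil.
Qed.

Lemma D3_codes_lift : all (fun s =>
  has (fun w => (word3 w == s) || (word3 w == opp3 s)) D3_words) D3_codes.
Proof. by vm_compute. Qed.

Lemma D3_lift d : d \in D3_reps -> exists w,
  [/\ expsum true w = 0, expsum false w = 0 & eqpm (redm 3 (word_mx w)) (redm 3 d)].
Proof.
move=> d_D3; have /mapP[s s_D3 d_s] : redm 3 d \in [seq Zp3_mx s | s <- D3_codes].
  by rewrite -D3_reps_mod3 map_f.
have /hasP[w w_D3 w_s] := allP D3_codes_lift s s_D3.
exists w; rewrite !expsum_D3_words //; split => //.
by rewrite redm3_word_mx d_s; apply: eqpm_Zp3_mx.
Qed.

Lemma in_closure_Phi_mod N g :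
  (forall m, odd m -> (1 < m)%N ->
    exists2 X : 'M['Z_m]_2, Phi_mod N X & eqpm X (redm m (g m))) ->
  in_closure_Phi N g.
Proof.
move=> Phi_g m m_odd; have [m_gt1 | m_le1] := ltnP 1 m.
  have [_ [w [wA wB <-]] w_g] := Phi_g m m_odd m_gt1.
  exists (word_mx w); split; last exact/(congr_mx_eqpm m_gt1).
  by exists w; split; [left | split].
exists 1%:M; split; first by exists [::]; rewrite /expsum !big_nil dvdz0; split=> //; left.
by left=> i j; rewrite (_ : m = 1%N) ?modz1 //; case: m m_odd m_le1 => [|[]].
Qed.

Lemma closure_Phi_coprime3 N g : ~~ (3 %| N)%N -> SL2_odd g -> in_closure_Phi N g.
Proof.
move=> N_coprime3 [_ det_g]; apply: in_closure_Phi_mod => m m_odd m_gt1.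
exists (redm m (g m)); last exact: eqpm_refl.
exact: Phi_mod_SL2_coprime3N m_gt1 m_odd N_coprime3 _ (det_redm m_gt1 (det_g m m_odd)).
Qed.

Lemma closure_Phi_sub_Dhat N g : (3 %| N)%N -> in_closure_Phi N g -> in_Dhat g.
Proof.
move=> N3 /(_ 3%N isT) [gam [[w [gam_w [wA wB]]] gam_g]].
have three_N : (3 %| N%:Z)%Z by rewrite dvdzE.
have [d d_D3 w_d] := Q8_D3 (word3_Q8 (dvdz_trans three_N wA) (dvdz_trans three_N wB)).
exists d => //; apply/(congr_mx_eqpm three_gt1).
apply: (eqpm_trans (Y := redm 3 gam)); first exact/eqpm_sym/(congr_mx_eqpm three_gt1).
apply: eqpm_trans w_d; rewrite -redm3_word_mx.
by case: gam_w => ->; [left | right; rewrite redmN].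
Qed.

Lemma Dhat_sub_closure_Phi N g :
  (3 %| N)%N -> SL2_odd g -> in_Dhat g -> in_closure_Phi N g.
Proof.
move=> N3 [g_compat det_g] [d d_D3 g3_d]; apply: in_closure_Phi_mod => m m_odd m_gt1.
have det_gm := det_g m m_odd.
have [m3 | m_coprime3] := boolP (3 %| m)%N; last first.
  exists (redm m (g m)); last exact: eqpm_refl.
  exact: Phi_mod_SL2_coprime3m m_gt1 m_odd m_coprime3 _ (det_redm m_gt1 det_gm).
have [w [wA wB w_d]] := D3_lift d_D3.
set Y := word_mx (word_inv w) *m g m.
have g_wY : g m = word_mx w *m Y by rewrite /Y mulmxA word_mx_inv mul1mx.
have Y_pm1 : eqpm (redm 3 Y) 1%:M.
  rewrite /Y redmM -(redm1 3) -(word_inv_mx w) redmM; apply: eqpm_mull.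
  apply: (eqpm_trans (Y := redm 3 (g 3%N))).
    by left; apply/(congr_mx_redm three_gt1); apply: g_compat.
  exact: eqpm_trans (proj1 (congr_mx_eqpm three_gt1 _ _) g3_d) (eqpm_sym w_d).
have det_Y : (\det Y = 1 %[mod m])%Z by rewrite /Y det_mulmx det_word_mx mul1r.
have [X PhiX XY] := Phi_mod_level3_pm N m_gt1 m_odd m3 Y_pm1 det_Y.
exists (redm m (word_mx w) *m X); last by rewrite g_wY redmM; apply: eqpm_mull.
by apply: Phi_modM PhiX; exists w; rewrite wA wB dvdz0.
Qed.

Theorem proposition14 (N : nat) (hN : (1 <= N)%N) :
  (~~ (3 %| N)%N -> forall g, SL2_odd g -> in_closure_Phi N g) /\
  ((3 %| N)%N -> forall g, SL2_odd g -> (in_closure_Phi N g <-> in_Dhat g)).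
Proof.
split=> [N_coprime3 g | N3 g g_SL2]; first exact: closure_Phi_coprime3.
by split; [exact: closure_Phi_sub_Dhat | exact: Dhat_sub_closure_Phi].
Qed.
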